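(* Let $\varphi:[0,1)\to(0,\infty)$ be continuous and regularly varying at $1$ with index $\rho>0$, and let $\kappa(t):=1$, $t\in[0,1)$. Let $c_0:=0<c_1<c_2<\dots<1$ be such that $\|\mathbb 1_{(c_n,1)}\kappa\|^2=2^{-n}\|\kappa\|^2$, set $J_n=(c_{n-1},c_n)$ and $\omega_n=\|\mathbb 1_{J_n}\kappa\|\cdot\|\mathbb 1_{J_n}\varphi\|$ (norms in $L^2(0,1)$). Then \[ \omega_n\asymp 2^{-n}\varphi(1-2^{-n}), \] i.e. there exist $C_1,C_2>0$ with $C_1\,2^{-n}\varphi(1-2^{-n})\le\omega_n\le C_2\,2^{-n}\varphi(1-2^{-n})$ for all $n\in\mathbb N$.
   Context: A measurable function $\psi:[1,\infty)\to(0,\infty)$ is regularly varying with index $\rho_\psi\in\mathbb R$ if $\lim_{x\to\infty}\psi(kx)/\psi(x)=k^{\rho_\psi}$ for every $k>0$. A function $\varphi:[0,1)\to(0,\infty)$ is regularly varying at $1$ with index $\rho$ if $\psi(x):=\varphi\big(\frac{x-1}{x}\big)$, $x\in[1,\infty)$, is regularly varying with index $\rho$. *)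

From Stdlib Require Import Reals.
From Coquelicot Require Import Coquelicot.
Open Scope R_scope.

Definition psi_of (phi : R -> R) (x : R) : R := phi ((x - 1) / x).

Definition regularly_varying (psi : R -> R) (rho : R) : Prop :=
  forall k : R, 0 < k ->
    is_lim (fun x => psi (k * x) / psi x) p_infty (Rpower k rho).

Definition regularly_varying_at1 (phi : R -> R) (rho : R) : Prop :=
  regularly_varying (psi_of phi) rho.

Definition continuous_on_01 (phi : R -> R) : Prop :=
  (forall t, 0 < t < 1 -> continuous phi t) /\
  filterlim phi (at_right 0) (locally (phi 0)).

(* || 1_{(a,b)} f ||_{L^2(0,1)}  for 0 <= a <= b <= 1 *)
Definition L2norm_ind (a b : R) (f : R -> R) : R :=
  sqrt (RInt (fun t => (f t) ^ 2) a b).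

From Stdlib Require Import Reals Lra Lia Classical ClassicalEpsilon.
From Coquelicot Require Import Coquelicot.
Open Scope R_scope.

(* The normalisation of [kappa = 1] forces [c_n = 1 - 2^-n], so [J_n] has length
   [2^-n] and [omega_n = 2^(-n/2) ||1_(J_n) phi||]; it suffices that [phi] varies
   by a bounded factor on each [J_n].  In the variable [y = -ln (1 - t)] put
   [h y = ln psi(e^y)].  Regular variation says that [h (y + u) - h y] is
   eventually bounded for each fixed [u].  The sets of [u] for which the bound
   [N] holds from [y = N + 1] on are closed and cover [[0,1]], so by Baire one of
   them contains an interval, and chaining makes the bound uniform in
   [u] in [[0,1]] for large [y] (the weak form of Karamata's uniform convergence
   theorem).  [J_n] becomes a [y]-interval of length [ln 2 < 1], which handles
   large [n]; the finitely many other blocks lie in a compact subinterval of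
   [[0,1)], where the continuous positive [phi] has bounded ratios. *)

Lemma continuous_gt_locally (f : R -> R) x c :
  continuous f x -> c < f x -> locally x (fun y => c < f y).
Proof. intros Hf Hc. apply Hf. exact (open_gt c (f x) Hc). Qed.

Lemma exp_le_exp_of_le x y : x <= y -> exp x <= exp y.
Proof. intros [Hlt| ->]; [left; apply exp_increasing|]; lra. Qed.

Lemma exp_neg_lt_1 y : 0 < y -> 0 < exp (- y) < 1.
Proof. intros Hy. split; [apply exp_pos|]. rewrite <- exp_0. apply exp_increasing. lra. Qed.

Lemma ln_2_lt_1 : ln 2 < 1.
Proof.
  rewrite <- (ln_exp 1). apply ln_increasing; [lra|].
  pose proof (exp_ineq1 1 ltac:(lra)). lra.
Qed.

Lemma inv_pow2_pos_le_1 n : 0 < / 2 ^ n <= 1.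
Proof.
  assert (1 <= 2 ^ n) by (apply pow_R1_Rle; lra).
  split; [apply Rinv_0_lt_compat; lra|].
  rewrite <- Rinv_1. apply Rinv_le_contravar; lra.
Qed.

Lemma inv_pow2_antimono m n : (m <= n)%nat -> / 2 ^ n <= / 2 ^ m.
Proof.
  intros Hmn. apply Rinv_le_contravar; [apply pow_lt; lra|].
  apply Rle_pow; [lra | exact Hmn].
Qed.

Lemma closed_avoiding_subinterval (D : R -> Prop) a b :
  closed D -> a < b -> ~ (forall x, a <= x <= b -> D x) ->
  exists a' b', a <= a' /\ a' < b' /\ b' <= b /\ forall x, a' <= x <= b' -> ~ D x.
Proof.
  intros HD Hab Hnot.
  destruct (not_all_ex_not _ _ Hnot) as [x Hx].
  destruct (imply_to_and _ _ Hx) as [Hxab HnD].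
  destruct (open_not D HD x HnD) as [e He].
  pose proof (cond_pos e).
  exists (Rmax a (x - e / 2)), (Rmin b (x + e / 2)).
  repeat split.
  - apply Rmax_l.
  - apply Rmax_lub_lt; apply Rmin_glb_lt; lra.
  - apply Rmin_l.
  - intros y [Hy1 Hy2]. apply He. change (Rabs (y - x) < e).
    pose proof (Rmax_r a (x - e / 2)). pose proof (Rmin_r b (x + e / 2)).
    apply Rabs_def1; lra.
Qed.

Lemma nested_intervals_meet (l r : nat -> R) :
  (forall n, l n <= l (S n)) -> (forall n, r (S n) <= r n) -> (forall n, l n <= r n) ->
  exists x, forall n, l n <= x <= r n.
Proof.
  intros Hl Hr Hlr.
  assert (Hmono : forall n m, (n <= m)%nat -> l n <= l m /\ r m <= r n).
  { intros n m Hnm. induction Hnm as [|m _ IH]; [lra|].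
    specialize (Hl m). specialize (Hr m). lra. }
  assert (Hcross : forall n m, l n <= r m).
  { intros n m.
    destruct (Hmono n (max n m)) as [H1 _]; [lia|].
    destruct (Hmono m (max n m)) as [_ H2]; [lia|].
    specialize (Hlr (max n m)). lra. }
  destruct (completeness (fun x => exists n, x = l n)) as [x [Hub Hlub]].
  - exists (r O). intros y [n ->]. apply Hcross.
  - exists (l O). eauto.
  - exists x. intros n. split.
    + apply Hub. eauto.
    + apply Hlub. intros y [k ->]. apply Hcross.
Qed.

Lemma baire_interval (E : nat -> R -> Prop) a b :
  a < b -> (forall N, closed (E N)) -> (forall x, a <= x <= b -> exists N, E N x) ->
  exists N a' b', a' < b' /\ forall x, a' <= x <= b' -> E N x.
Proof.
  intros Hab HE Hcov. apply NNPP. intros Hno.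
  assert (step : forall N (p : R * R), { q : R * R | fst p < snd p ->
      fst p <= fst q /\ fst q < snd q /\ snd q <= snd p /\
      forall x, fst q <= x <= snd q -> ~ E N x }).
  { intros N [a0 b0]. apply constructive_indefinite_description. simpl.
    destruct (Rlt_dec a0 b0) as [Hlt|Hge]; [|exists (a0, b0); intros; lra].
    destruct (closed_avoiding_subinterval (E N) a0 b0 (HE N) Hlt) as [a1 [b1 H]].
    { intros Hall. apply Hno. exists N, a0, b0. auto. }
    exists (a1, b1). auto. }
  set (I := fix I n := match n with O => (a, b) | S k => proj1_sig (step k (I k)) end).
  assert (HI : forall n, fst (I n) < snd (I n)).
  { induction n as [|n IH]; [exact Hab|]. apply (proj2_sig (step n (I n)) IH). }
  assert (HIS : forall n, fst (I n) <= fst (I (S n)) /\ fst (I (S n)) < snd (I (S n)) /\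
      snd (I (S n)) <= snd (I n) /\ forall x, fst (I (S n)) <= x <= snd (I (S n)) -> ~ E n x).
  { intros n. exact (proj2_sig (step n (I n)) (HI n)). }
  destruct (nested_intervals_meet (fun n => fst (I n)) (fun n => snd (I n))) as [x Hx].
  - intros n. apply HIS.
  - intros n. apply HIS.
  - intros n. left. apply HI.
  - destruct (Hcov x (Hx O)) as [N HN].
    apply (proj2 (proj2 (proj2 (HIS N))) x (Hx (S N)) HN).
Qed.

Lemma increment_bound_chain (h : R -> R) Z d B :
  0 <= d ->
  (forall z v, Z <= z -> 0 <= v <= d -> Rabs (h (z + v) - h z) <= B) ->
  forall k z v, Z <= z -> 0 <= v <= INR k * d -> Rabs (h (z + v) - h z) <= INR k * B.
Proof.
  intros Hd Hstep.
  assert (HB : 0 <= B).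
  { specialize (Hstep Z 0 (Rle_refl Z) ltac:(lra)).
    rewrite Rplus_0_r, Rminus_diag, Rabs_R0 in Hstep. exact Hstep. }
  induction k as [|k IH]; intros z v Hz Hv.
  - simpl in Hv. replace v with 0 by lra.
    rewrite Rplus_0_r, Rminus_diag, Rabs_R0. simpl; lra.
  - pose proof (pos_INR k) as Hk. rewrite S_INR in *.
    destruct (Rle_dec v (INR k * d)) as [Hle|Hgt].
    + pose proof (IH z v Hz (conj (proj1 Hv) Hle)). nra.
    + assert (Hfar := IH z (INR k * d) Hz ltac:(nra)).
      assert (Hnear := Hstep (z + INR k * d) (v - INR k * d) ltac:(nra) ltac:(nra)).
      replace (z + INR k * d + (v - INR k * d)) with (z + v) in Hnear by ring.
      pose proof (Rabs_triang (h (z + v) - h (z + INR k * d)) (h (z + INR k * d) - h z)).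
      replace (h (z + v) - h (z + INR k * d) + (h (z + INR k * d) - h z))
        with (h (z + v) - h z) in * by ring.
      lra.
Qed.

Section UniformBoundedness.

Variable h : R -> R.
Hypothesis h_continuous : forall y, 0 < y -> continuous h y.

(* The guard [0 < y + u] makes these sets closed although [h] is only
   continuous on [(0, +oo)]. *)
Let bounded_from (N : nat) (u : R) : Prop :=
  forall y, INR N + 1 <= y -> 0 < y + u -> Rabs (h (y + u) - h y) <= INR N.

Lemma closed_bounded_from N : closed (bounded_from N).
Proof.
  intros u Hnear. apply NNPP. intros Hu. apply Hnear.
  destruct (not_all_ex_not _ _ Hu) as [y Hy].
  destruct (imply_to_and _ _ Hy) as [HyN Hy'].
  destruct (imply_to_and _ _ Hy') as [Hpos Hbig]. apply Rnot_le_lt in Hbig.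
  assert (Hshift : forall w, continuous (fun u' => y + u') w).
  { intros w. apply (continuous_plus (fun _ => y) (fun u' => u')).
    - apply continuous_const.
    - apply continuous_id. }
  assert (Hgap : continuous (fun u' => Rabs (h (y + u') - h y)) u).
  { apply continuous_Rabs_comp.
    apply (continuous_minus (fun u' => h (y + u')) (fun _ => h y)).
    - apply (continuous_comp (fun u' => y + u') h); auto.
    - apply continuous_const. }
  generalize (filter_and _ _ (continuous_gt_locally _ _ _ (Hshift u) Hpos)
                 (continuous_gt_locally _ _ _ Hgap Hbig)).
  apply filter_imp. intros u' [Hpos' Hbig'] Hu'.
  specialize (Hu' y HyN Hpos'). lra.
Qed.

Lemma bounded_from_interval_increment N a b :
  (forall u, a <= u <= b -> bounded_from N u) ->
  forall z v, INR N + 1 + Rabs a <= z -> 0 <= v <= b - a ->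
    Rabs (h (z + v) - h z) <= 2 * INR N.
Proof.
  intros Hab z v Hz Hv.
  pose proof (pos_INR N). pose proof (Rle_abs a). pose proof (Rle_abs (- a)).
  rewrite Rabs_Ropp in *.
  assert (Hbase : INR N + 1 <= z - a) by lra.
  assert (Hto := Hab (a + v) ltac:(lra) (z - a) Hbase ltac:(lra)).
  assert (Hfrom := Hab a ltac:(lra) (z - a) Hbase ltac:(lra)).
  replace (z - a + (a + v)) with (z + v) in Hto by ring.
  replace (z - a + a) with z in Hfrom by ring.
  rewrite Rabs_minus_sym in Hfrom.
  pose proof (Rabs_triang (h (z + v) - h (z - a)) (h (z - a) - h z)).
  replace (h (z + v) - h (z - a) + (h (z - a) - h z)) with (h (z + v) - h z) in * by ring.
  lra.
Qed.

Hypothesis h_pointwise :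
  forall u, exists Y B, forall y, Y <= y -> Rabs (h (y + u) - h y) <= B.

Lemma uniform_increment_bound :
  exists Z B, forall y1 y2, Z <= y1 -> Z <= y2 -> Rabs (y1 - y2) <= 1 ->
    Rabs (h y1 - h y2) <= B.
Proof.
  destruct (baire_interval bounded_from 0 1 Rlt_0_1 closed_bounded_from)
    as [N [a [b [Hab Hab_bounded]]]].
  { intros u _. destruct (h_pointwise u) as [Y [B HYB]].
    destruct (INR_unbounded (Rabs Y + Rabs B)) as [N HN].
    exists N. intros y Hy _. pose proof (Rle_abs Y). pose proof (Rle_abs B).
    pose proof (Rabs_pos Y). pose proof (Rabs_pos B).
    specialize (HYB y ltac:(lra)). lra. }
  set (Z := INR N + 1 + Rabs a).
  destruct (INR_archimed (b - a) 1 ltac:(lra)) as [k Hk].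
  assert (Hunit : forall z v, Z <= z -> 0 <= v <= 1 ->
                    Rabs (h (z + v) - h z) <= INR k * (2 * INR N)).
  { intros z v Hz Hv. apply (increment_bound_chain h Z (b - a)); [lra| |exact Hz|lra].
    exact (bounded_from_interval_increment N a b Hab_bounded). }
  exists Z, (INR k * (2 * INR N)). intros y1 y2 Hy1 Hy2 Hy12.
  apply Rabs_le_between in Hy12.
  destruct (Rle_dec y2 y1) as [Hle|Hgt].
  - replace y1 with (y2 + (y1 - y2)) by ring. apply Hunit; [exact Hy2 | lra].
  - rewrite Rabs_minus_sym. replace y2 with (y1 + (y2 - y1)) by ring.
    apply Hunit; [exact Hy1 | lra].
Qed.

End UniformBoundedness.

Lemma regularly_varying_log_increment (psi : R -> R) rho :
  regularly_varying psi rho -> (forall x, 1 <= x -> 0 < psi x) ->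
  forall u, exists Y B, forall y, Y <= y ->
    Rabs (ln (psi (exp (y + u))) - ln (psi (exp y))) <= B.
Proof.
  intros Hreg Hpos u.
  set (l := Rpower (exp u) rho).
  assert (Hl : 0 < l / 2) by (apply Rdiv_lt_0_compat; [apply exp_pos | lra]).
  destruct (proj2 (is_lim_spec _ _ _) (Hreg (exp u) (exp_pos u)) (mkposreal _ Hl))
    as [M HM].
  exists (Rabs M + Rabs u), (Rabs (ln (l / 2)) + Rabs (ln (3 * l / 2))).
  intros y Hy. pose proof (Rle_abs M). pose proof (Rle_abs (- u)). rewrite Rabs_Ropp in *.
  pose proof (Rabs_pos M). pose proof (Rabs_pos u).
  pose proof (exp_ineq1_le y). pose proof (exp_ineq1_le (y + u)).
  assert (Hpy : 0 < psi (exp y)) by (apply Hpos; lra).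
  assert (Hpyu : 0 < psi (exp (y + u))) by (apply Hpos; lra).
  assert (Hratio := HM (exp y) ltac:(lra)). simpl in Hratio.
  rewrite <- exp_plus, Rplus_comm in Hratio. apply Rabs_def2 in Hratio.
  fold l in Hratio. set (r := psi (exp (y + u)) / psi (exp y)) in Hratio.
  rewrite <- ln_div by assumption. fold r.
  assert (Hlo : ln (l / 2) <= ln r) by (apply ln_le; lra).
  assert (Hhi : ln r <= ln (3 * l / 2)) by (apply ln_le; lra).
  pose proof (Rle_abs (ln (3 * l / 2))). pose proof (Rle_abs (- ln (l / 2))).
  rewrite Rabs_Ropp in *.
  pose proof (Rabs_pos (ln (l / 2))). pose proof (Rabs_pos (ln (3 * l / 2))).
  apply Rabs_le. lra.
Qed.

Lemma psi_of_pos phi :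
  (forall t, 0 <= t < 1 -> 0 < phi t) -> forall x, 1 <= x -> 0 < psi_of phi x.
Proof.
  intros Hpos x Hx. apply Hpos.
  assert (0 < / x <= 1).
  { split; [apply Rinv_0_lt_compat; lra|]. rewrite <- Rinv_1. apply Rinv_le_contravar; lra. }
  unfold Rdiv. rewrite Rmult_minus_distr_r, Rinv_r by lra. lra.
Qed.

Definition log_profile (phi : R -> R) (y : R) : R := ln (phi (1 - exp (- y))).

Lemma log_profile_psi_of phi y : log_profile phi y = ln (psi_of phi (exp y)).
Proof.
  unfold log_profile, psi_of. rewrite exp_Ropp. do 2 f_equal.
  field. apply Rgt_not_eq, exp_pos.
Qed.

Lemma exp_log_profile phi t :
  (forall t, 0 <= t < 1 -> 0 < phi t) -> 0 <= t < 1 ->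
  exp (log_profile phi (- ln (1 - t))) = phi t.
Proof.
  intros Hpos Ht. unfold log_profile.
  rewrite Ropp_involutive, (exp_ln (1 - t)) by lra.
  replace (1 - (1 - t)) with t by ring. apply exp_ln, Hpos, Ht.
Qed.

Lemma log_profile_continuous phi :
  continuous_on_01 phi -> (forall t, 0 <= t < 1 -> 0 < phi t) ->
  forall y, 0 < y -> continuous (log_profile phi) y.
Proof.
  intros [Hcont _] Hpos y Hy. pose proof (exp_neg_lt_1 y Hy).
  apply (continuous_comp (fun y => 1 - exp (- y)) (fun t => ln (phi t))).
  - apply (ex_derive_continuous (V := R_NormedModule)). auto_derive. exact I.
  - apply (continuous_comp phi ln).
    + apply Hcont. lra.
    + apply continuous_ln, Hpos. lra.
Qed.

Lemma log_profile_uniform_increment phi rho :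
  continuous_on_01 phi -> (forall t, 0 <= t < 1 -> 0 < phi t) ->
  regularly_varying_at1 phi rho ->
  exists Z B, forall y1 y2, Z <= y1 -> Z <= y2 -> Rabs (y1 - y2) <= 1 ->
    Rabs (log_profile phi y1 - log_profile phi y2) <= B.
Proof.
  intros Hcont Hpos Hreg.
  apply uniform_increment_bound; [apply log_profile_continuous; auto|].
  intros u.
  destruct (regularly_varying_log_increment _ _ Hreg (psi_of_pos phi Hpos) u) as [Y [B HYB]].
  exists Y, B. intros y Hy. rewrite !log_profile_psi_of. apply HYB, Hy.
Qed.

Lemma continuous_on_01_extension phi :
  continuous_on_01 phi ->
  exists g : R -> R,
    (forall x, x < 1 -> continuous g x) /\ (forall x, 0 <= x < 1 -> g x = phi x).
Proof.
  intros [Hcont Hcont0].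
  destruct (C0_extension_left phi (phi 0) 0 1 Rlt_0_1 Hcont Hcont0) as [g [Hg [Hgphi Hg0]]].
  exists g. split; [exact Hg|]. intros x [[Hx| <-] _]; auto.
Qed.

Lemma continuous_on_01_ratio_bounded phi b :
  continuous_on_01 phi -> (forall t, 0 <= t < 1 -> 0 < phi t) -> 0 <= b < 1 ->
  exists K, 0 < K /\ forall s t, 0 <= s <= b -> 0 <= t <= b -> phi s <= K * phi t.
Proof.
  intros Hcont Hpos Hb.
  destruct (continuous_on_01_extension phi Hcont) as [g [Hg Hgphi]].
  assert (Hgb : forall x, 0 <= x <= b -> continuity_pt g x).
  { intros x Hx. apply continuity_pt_filterlim, Hg. lra. }
  destruct (continuity_ab_maj g 0 b (proj1 Hb) Hgb) as [xM [HxM HxMb]].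
  destruct (continuity_ab_min g 0 b (proj1 Hb) Hgb) as [xm [Hxm Hxmb]].
  assert (Hmin : 0 < phi xm) by (apply Hpos; lra).
  assert (HK : 0 < phi xM / phi xm).
  { apply Rdiv_lt_0_compat; [apply Hpos; lra | exact Hmin]. }
  exists (phi xM / phi xm). split; [exact HK|].
  intros s t Hs Ht.
  specialize (HxM s Hs). specialize (Hxm t Ht). rewrite !Hgphi in HxM, Hxm by lra.
  apply (Rle_trans _ (phi xM / phi xm * phi xm)).
  - unfold Rdiv. rewrite Rmult_assoc, Rinv_l, Rmult_1_r by lra. exact HxM.
  - apply Rmult_le_compat_l; lra.
Qed.

(* The closure of the paper's [J_(m+1)], once [c_n = 1 - 2^-n] is known. *)
Definition dyadic_block (m : nat) (t : R) : Prop := 1 - / 2 ^ m <= t <= 1 - / 2 ^ S m.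

Lemma dyadic_block_in_01 m t : dyadic_block m t -> 0 <= t < 1.
Proof.
  intros Ht. pose proof (inv_pow2_pos_le_1 m). pose proof (inv_pow2_pos_le_1 (S m)).
  unfold dyadic_block in Ht. lra.
Qed.

Lemma dyadic_block_right_end m : dyadic_block m (1 - / 2 ^ S m).
Proof.
  pose proof (inv_pow2_antimono m (S m) (Nat.le_succ_diag_r m)).
  unfold dyadic_block. lra.
Qed.

Lemma dyadic_block_log m t :
  dyadic_block m t -> INR m * ln 2 <= - ln (1 - t) <= INR (S m) * ln 2.
Proof.
  intros Ht. pose proof (inv_pow2_pos_le_1 (S m)).
  assert (Hln : forall k, ln (/ 2 ^ k) = - (INR k * ln 2)).
  { intros k. rewrite ln_Rinv, ln_pow by (try apply pow_lt; lra). ring. }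
  unfold dyadic_block in Ht.
  assert (ln (/ 2 ^ S m) <= ln (1 - t)) by (apply ln_le; lra).
  assert (ln (1 - t) <= ln (/ 2 ^ m)) by (apply ln_le; lra).
  rewrite !Hln in *. lra.
Qed.

Lemma dyadic_block_ratio_bounded phi rho :
  continuous_on_01 phi -> (forall t, 0 <= t < 1 -> 0 < phi t) ->
  regularly_varying_at1 phi rho ->
  exists K, 0 < K /\ forall m s t, dyadic_block m s -> dyadic_block m t -> phi s <= K * phi t.
Proof.
  intros Hcont Hpos Hreg.
  destruct (log_profile_uniform_increment phi rho Hcont Hpos Hreg) as [Z [B HB]].
  pose proof ln_2_lt_1. pose proof ln_lt_2.
  destruct (INR_archimed (ln 2) Z ltac:(lra)) as [m0 Hm0].
  destruct (continuous_on_01_ratio_bounded phi (1 - / 2 ^ S m0) Hcont Hpos)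
    as [K0 [HK0 HK0bound]].
  { exact (dyadic_block_in_01 m0 _ (dyadic_block_right_end m0)). }
  exists (Rmax K0 (exp B)). split; [exact (Rlt_le_trans _ _ _ HK0 (Rmax_l _ _))|].
  intros m s t Hs Ht.
  pose proof (dyadic_block_in_01 m s Hs). pose proof (dyadic_block_in_01 m t Ht).
  assert (Hphit : 0 <= phi t) by (left; apply Hpos; lra).
  destruct (Nat.le_gt_cases m m0) as [Hsmall|Hlarge].
  - assert (/ 2 ^ S m0 <= / 2 ^ S m) by (apply inv_pow2_antimono; lia).
    unfold dyadic_block in Hs, Ht.
    apply (Rle_trans _ (K0 * phi t)); [apply HK0bound; lra|].
    apply Rmult_le_compat_r; [exact Hphit | apply Rmax_l].
  - apply dyadic_block_log in Hs, Ht. rewrite S_INR in Hs, Ht.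
    assert (INR m0 <= INR m) by (apply le_INR; lia).
    assert (Hfar : Z <= INR m * ln 2) by nra.
    specialize (HB (- ln (1 - s)) (- ln (1 - t)) ltac:(lra) ltac:(lra)
                   ltac:(apply Rabs_le; lra)).
    apply Rabs_le_between in HB.
    rewrite <- (exp_log_profile phi s), <- (exp_log_profile phi t) by auto.
    apply (Rle_trans _ (exp B * exp (log_profile phi (- ln (1 - t))))).
    + rewrite <- exp_plus. apply exp_le_exp_of_le. lra.
    + apply Rmult_le_compat_r; [left; apply exp_pos | apply Rmax_r].
Qed.

Lemma L2norm_ind_one a b : L2norm_ind a b (fun _ => 1) = sqrt (b - a).
Proof.
  unfold L2norm_ind. rewrite RInt_const. unfold scal; simpl; unfold mult; simpl.
  f_equal. ring.
Qed.

Lemma ex_RInt_sqr_continuous_on_01 phi a b :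
  continuous_on_01 phi -> 0 <= a -> a <= b -> b < 1 -> ex_RInt (fun t => phi t ^ 2) a b.
Proof.
  intros Hcont Ha Hab Hb.
  destruct (continuous_on_01_extension phi Hcont) as [g [Hg Hgphi]].
  apply (ex_RInt_ext (fun t => g t ^ 2)).
  { intros x Hx. rewrite Rmin_left, Rmax_right in Hx by lra.
    rewrite Hgphi by lra. reflexivity. }
  apply (ex_RInt_continuous (V := R_CompleteNormedModule)). intros x Hx.
  rewrite Rmin_left, Rmax_right in Hx by lra.
  apply (continuous_comp g (fun y => y ^ 2)).
  - apply Hg. lra.
  - apply (ex_derive_continuous (V := R_NormedModule)). auto_derive. exact I.
Qed.

Lemma L2norm_ind_between f a b m M :
  a <= b -> 0 <= m -> ex_RInt (fun t => f t ^ 2) a b ->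
  (forall t, a <= t <= b -> m <= f t <= M) ->
  m * sqrt (b - a) <= L2norm_ind a b f <= M * sqrt (b - a).
Proof.
  intros Hab Hm Hint Hf.
  assert (HM : 0 <= M) by (destruct (Hf a ltac:(lra)); lra).
  assert (Hsqrt : forall k, 0 <= k -> k * sqrt (b - a) = sqrt (RInt (fun _ => k ^ 2) a b)).
  { intros k Hk. rewrite RInt_const. change (scal (b - a) (k ^ 2)) with ((b - a) * k ^ 2).
    rewrite Rmult_comm, sqrt_mult_alt, sqrt_pow2 by lra. ring. }
  unfold L2norm_ind. rewrite !Hsqrt by lra.
  split; apply sqrt_le_1_alt, RInt_le; auto using ex_RInt_const;
    intros t Ht; destruct (Hf t ltac:(lra)); simpl; nra.
Qed.

Lemma dyadic_block_L2_estimate phi K m :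
  continuous_on_01 phi -> (forall t, 0 <= t < 1 -> 0 < phi t) -> 0 < K ->
  (forall s t, dyadic_block m s -> dyadic_block m t -> phi s <= K * phi t) ->
  / K * (/ 2 ^ S m * phi (1 - / 2 ^ S m))
    <= L2norm_ind (1 - / 2 ^ m) (1 - / 2 ^ S m) (fun _ => 1)
       * L2norm_ind (1 - / 2 ^ m) (1 - / 2 ^ S m) phi
    <= K * (/ 2 ^ S m * phi (1 - / 2 ^ S m)).
Proof.
  intros Hcont Hpos HK Hratio.
  pose proof (dyadic_block_right_end m) as Hend.
  pose proof (dyadic_block_in_01 m _ Hend). pose proof (inv_pow2_pos_le_1 (S m)).
  set (p := phi (1 - / 2 ^ S m)).
  assert (Hp : 0 < p) by (apply Hpos; lra).
  assert (Hlen : 1 - / 2 ^ S m - (1 - / 2 ^ m) = / 2 ^ S m).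
  { simpl. field. apply pow_nonzero. lra. }
  assert (Hin : forall t, dyadic_block m t -> p / K <= phi t <= K * p).
  { intros t Ht. split; [|exact (Hratio t _ Ht Hend)].
    apply (Rmult_le_reg_l K); [exact HK|]. unfold Rdiv.
    rewrite <- Rmult_assoc, (Rmult_comm K p), Rmult_assoc, Rinv_r, Rmult_1_r by lra.
    exact (Hratio _ t Hend Ht). }
  destruct (L2norm_ind_between phi (1 - / 2 ^ m) (1 - / 2 ^ S m) (p / K) (K * p))
    as [Hlo Hhi].
  - exact (proj1 Hend).
  - left. apply Rdiv_lt_0_compat; lra.
  - pose proof (inv_pow2_pos_le_1 m).
    apply ex_RInt_sqr_continuous_on_01; [exact Hcont | lra | exact (proj1 Hend) | lra].
  - exact Hin.
  - rewrite L2norm_ind_one. rewrite Hlen in Hlo, Hhi |- *.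
    assert (Hs : sqrt (/ 2 ^ S m) * sqrt (/ 2 ^ S m) = / 2 ^ S m) by (apply sqrt_sqrt; lra).
    pose proof (sqrt_pos (/ 2 ^ S m)).
    set (s := sqrt (/ 2 ^ S m)) in *.
    split.
    + replace (/ K * (/ 2 ^ S m * p)) with (s * (p / K * s))
        by (rewrite <- Hs; unfold Rdiv; ring).
      apply Rmult_le_compat_l; assumption.
    + replace (K * (/ 2 ^ S m * p)) with (s * (K * p * s))
        by (rewrite <- Hs; ring).
      apply Rmult_le_compat_l; assumption.
Qed.

Theorem lemma5p9 (phi : R -> R) (rho : R) (c : nat -> R) :
  continuous_on_01 phi ->
  (forall t, 0 <= t < 1 -> 0 < phi t) ->
  regularly_varying_at1 phi rho ->
  0 < rho ->
  let kappa : R -> R := fun _ => 1 in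
  c O = 0 ->
  (forall n, c n < c (S n)) ->
  (forall n, c n < 1) ->
  (forall n, (L2norm_ind (c n) 1 kappa) ^ 2
             = / 2 ^ n * (L2norm_ind 0 1 kappa) ^ 2) ->
  let omega (n : nat) : R :=
    L2norm_ind (c (n - 1)%nat) (c n) kappa * L2norm_ind (c (n - 1)%nat) (c n) phi in
  exists C1 C2 : R, 0 < C1 /\ 0 < C2 /\
    forall n : nat, (1 <= n)%nat ->
      C1 * (/ 2 ^ n * phi (1 - / 2 ^ n)) <= omega n /\
      omega n <= C2 * (/ 2 ^ n * phi (1 - / 2 ^ n)).
Proof.
  (* Only [k ^ rho > 0] matters, not [rho > 0]; the normalisation alone
     determines [c]. *)
  intros Hcont Hpos Hreg _ kappa _ _ Hc_lt_1 Hc_norm omega.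
  assert (Hc : forall n, c n = 1 - / 2 ^ n).
  { intros n. specialize (Hc_norm n). specialize (Hc_lt_1 n). unfold kappa in Hc_norm.
    rewrite !L2norm_ind_one, !pow2_sqrt in Hc_norm by lra. lra. }
  destruct (dyadic_block_ratio_bounded phi rho Hcont Hpos Hreg) as [K [HK Hratio]].
  exists (/ K), K. split; [apply Rinv_0_lt_compat; exact HK|]. split; [exact HK|].
  intros [|m] Hm; [lia|]. unfold omega, kappa.
  replace (S m - 1)%nat with m by lia. rewrite !Hc.
  apply dyadic_block_L2_estimate; [exact Hcont | exact Hpos | exact HK | exact (Hratio m)].
Qed.
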